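(* Let $(\mathfrak g,[\cdot,\cdot]_{\mathfrak g},E)$ be an ENL algebra and $r\in\mathfrak g\otimes\mathfrak g$. Assume that the cobracket $\Delta_r(x)=(\mathrm{ad}_x\otimes\mathrm{Id}+\mathrm{Id}\otimes\mathrm{ad}_x)(r)$ endows $(\mathfrak g,\mathfrak g^* )$ with a coboundary Lie bialgebra structure, where the bracket on $\mathfrak g^*$ is $\langle[\alpha,\beta]_{\mathfrak g^*},x\rangle=\langle\alpha\otimes\beta,\Delta_r(x)\rangle$. Then $(\mathfrak g^*,[\cdot,\cdot]_{\mathfrak g^*},E^* )$ is an ENL algebra if and only if for all $x\in\mathfrak g$, $(\mathrm{ad}_{Ex}\otimes\mathrm{Id}+\mathrm{Id}\otimes\mathrm{ad}_{Ex})(r)=(E\otimes\mathrm{Id})(\mathrm{ad}_x\otimes\mathrm{Id}+\mathrm{Id}\otimes\mathrm{ad}_x)(r)$.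
   Context: Vector spaces are finite-dimensional over an algebraically closed field of characteristic zero. An ENL algebra $(\mathfrak g,[\cdot,\cdot],E)$ is a Lie algebra with linear $E$ satisfying $E[x,y]=[x,Ey]$ for all $x,y$ (equivalently $E[x,y]=[Ex,y]$). $E^*$ denotes the dual map of $E$. *)

From HB Require Import structures.
From mathcomp Require Import all_boot all_order all_algebra.
Set Implicit Arguments. Unset Strict Implicit. Unset Printing Implicit Defensive.
Import GRing.Theory.
Local Open Scope ring_scope.

(* Coordinates: g = F^n as row vectors 'rV[F]_n with standard basis e_i = delta_mx 0 i;
   g^* is identified with 'rV[F]_n via the dual basis, pairing <a, x> = sum_i a_i x_i.
   A linear map A : 'M_n acts on row vectors by x |-> x *m A; its dual map A^* acts
   (in the dual basis) by a |-> a *m A^T.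
   An element of g (x) g is a matrix T : 'M_n, T = sum_{i,j} T i j e_i (x) e_j. *)

Section Defs.
Variables (F : fieldType) (n : nat).
Notation V := 'rV[F]_n.

Definition is_lie (br : V -> V -> V) : Prop :=
  [/\ (forall (a : F) x y z, br (a *: x + y) z = a *: br x z + br y z),
      (forall (a : F) x y z, br x (a *: y + z) = a *: br x y + br x z),
      (forall x, br x x = 0) &
      (forall x y z, br x (br y z) + br y (br z x) + br z (br x y) = 0)].

Definition is_ENL (br : V -> V -> V) (E : 'M[F]_n) : Prop :=
  is_lie br /\ forall x y, br x y *m E = br x (y *m E).

Definition dualmx (E : 'M[F]_n) : 'M[F]_n := E^T.

Definition adm (br : V -> V -> V) (x : V) : 'M[F]_n :=
  \matrix_(i, j) (br x (delta_mx 0 i)) 0 j.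

(* (A (x) B)(T) *)
Definition tmap (A B T : 'M[F]_n) : 'M[F]_n := A^T *m T *m B.

Definition cobr (br : V -> V -> V) (r : 'M[F]_n) (x : V) : 'M[F]_n :=
  tmap (adm br x) 1%:M r + tmap 1%:M (adm br x) r.

(* <a (x) b, T> *)
Definition tpair (a b : V) (T : 'M[F]_n) : F := (a *m T *m b^T) 0 0.

Definition dbr (br : V -> V -> V) (r : 'M[F]_n) (a b : V) : V :=
  \row_j tpair a b (cobr br r (delta_mx 0 j)).

Definition is_coboundary_lie_bialgebra (br : V -> V -> V) (r : 'M[F]_n) : Prop :=
  is_lie (dbr br r) /\
  forall x y, cobr br r (br x y) =
    (tmap (adm br x) 1%:M (cobr br r y) + tmap 1%:M (adm br x) (cobr br r y))
  - (tmap (adm br y) 1%:M (cobr br r x) + tmap 1%:M (adm br y) (cobr br r x)).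

End Defs.

(* Write D for the cobracket and e_k for the standard basis.  Pairing with a (x) b, the
   k-th coordinate of E^*[a, b] is <a (x) b, D(E e_k)> because D is linear, while that of
   [E^* a, b] is <a (x) b, (E (x) Id) D(e_k)>.  Hence E^*[a, b] = [E^* a, b] for all a, b
   iff D(E e_k) = (E (x) Id) D(e_k) for all k, iff the identity holds on all of g by
   linearity.  Since the dual bracket is a Lie bracket, the left-handed identity
   E^*[a, b] = [E^* a, b] is equivalent to the ENL axiom E^*[a, b] = [a, E^* b]. *)

From mathcomp Require Import all_boot all_order all_algebra.
Set Implicit Arguments.
Unset Strict Implicit.
Unset Printing Implicit Defensive.
Local Open Scope ring_scope.
Import GRing.Theory.

Section LieBracket.
Variables (F : fieldType) (n : nat) (br : 'rV[F]_n -> 'rV[F]_n -> 'rV[F]_n).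

Lemma lie_anticomm : is_lie br -> forall x y, br x y = - br y x.
Proof.
case=> linl linr alt _ x y.
have addl u v w : br (u + v) w = br u w + br v w by rewrite -[u]scale1r linl !scale1r.
have addr u v w : br w (u + v) = br w u + br w v by rewrite -[u]scale1r linr !scale1r.
by apply/eqP; rewrite -addr_eq0 -(alt (x + y)) addl !addr !alt add0r addr0.
Qed.

Lemma is_ENL_left (E : 'M[F]_n) :
  is_lie br -> is_ENL br E <-> forall x y, br x y *m E = br (x *m E) y.
Proof.
move=> Lbr; have anti := lie_anticomm Lbr.
split=> [[_ ENL] x y | ENL]; last split=> // x y;
  by rewrite anti mulNmx ENL -anti.
Qed.

End LieBracket.

Section Pairing.
Variables (F : fieldType) (n : nat).

Lemma tpair_sum (a b : 'rV[F]_n) (c : 'I_n -> F) (M : 'I_n -> 'M[F]_n) :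
  tpair a b (\sum_k c k *: M k) = \sum_k c k * tpair a b (M k).
Proof.
rewrite /tpair; elim/big_rec2: _ => [|k u w _ <-]; first by rewrite mulmx0 mul0mx mxE.
by rewrite mulmxDr mulmxDl -scalemxAr -scalemxAl !mxE.
Qed.

Lemma tpair_delta (i j : 'I_n) (M : 'M[F]_n) :
  tpair (delta_mx 0 i) (delta_mx 0 j) M = M i j.
Proof. by rewrite /tpair -rowE trmx_delta -colE !mxE. Qed.

Lemma tpair_inj (M N : 'M[F]_n) : (forall a b, tpair a b M = tpair a b N) -> M = N.
Proof. by move=> eqMN; apply/matrixP=> i j; rewrite -!(tpair_delta i j) eqMN. Qed.

End Pairing.

Section Cobracket.
Variables (F : fieldType) (n : nat) (br : 'rV[F]_n -> 'rV[F]_n -> 'rV[F]_n) (r : 'M[F]_n).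
Hypothesis br_linear_l : forall (a : F) x y z, br (a *: x + y) z = a *: br x z + br y z.

Lemma adm_linear a x y : adm br (a *: x + y) = a *: adm br x + adm br y.
Proof. by apply/matrixP=> i j; rewrite !mxE br_linear_l !mxE. Qed.

Lemma cobr_linear a x y : cobr br r (a *: x + y) = a *: cobr br r x + cobr br r y.
Proof.
rewrite /cobr /tmap adm_linear linearD /= linearZ /= !mulmxDl !mulmxDr.
by rewrite -!scalemxAl -!scalemxAr scalerDr addrACA.
Qed.

Lemma cobr0 : cobr br r 0 = 0.
Proof. by have := cobr_linear (-1) 0 0; rewrite scaler0 addr0 scaleN1r addNr. Qed.

Lemma cobr_sum (c : 'I_n -> F) (v : 'I_n -> 'rV[F]_n) :
  cobr br r (\sum_k c k *: v k) = \sum_k c k *: cobr br r (v k).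
Proof.
elim/big_rec2: _ => [|k u w _ <-]; first exact: cobr0.
by rewrite -cobr_linear.
Qed.

Lemma cobr_mulmx_basis (E : 'M[F]_n) :
  (forall k, cobr br r (delta_mx 0 k *m E) = tmap E 1%:M (cobr br r (delta_mx 0 k))) <->
  (forall x, cobr br r (x *m E) = tmap E 1%:M (cobr br r x)).
Proof.
split=> [onBasis x | onAll k]; last exact: onAll.
rewrite [x]row_sum_delta mulmx_suml.
under eq_bigr => k _ do rewrite -scalemxAl.
rewrite !cobr_sum /tmap mulmx1 mulmx_sumr; apply: eq_bigr => k _.
by rewrite onBasis /tmap mulmx1 scalemxAr.
Qed.

Lemma dbr_mulmx_dualmx (E : 'M[F]_n) a b :
  dbr br r a b *m dualmx E = \row_k tpair a b (cobr br r (delta_mx 0 k *m E)).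
Proof.
apply/rowP=> k; rewrite [RHS]mxE [delta_mx 0 k *m E]row_sum_delta -rowE.
rewrite cobr_sum tpair_sum mxE; apply: eq_bigr => j _.
by rewrite !mxE mulrC.
Qed.

Lemma dbr_dualmx_l (E : 'M[F]_n) a b :
  dbr br r (a *m dualmx E) b = \row_k tpair a b (tmap E 1%:M (cobr br r (delta_mx 0 k))).
Proof. by apply/rowP=> k; rewrite !mxE /tpair /tmap /dualmx mulmx1 !mulmxA. Qed.

Lemma dbr_dualmx_comm_basis (E : 'M[F]_n) :
  (forall a b, dbr br r a b *m dualmx E = dbr br r (a *m dualmx E) b) <->
  (forall k, cobr br r (delta_mx 0 k *m E) = tmap E 1%:M (cobr br r (delta_mx 0 k))).
Proof.
split=> [commE k | onBasis a b]; last first.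
  by rewrite dbr_mulmx_dualmx dbr_dualmx_l; apply/rowP=> k; rewrite !mxE onBasis.
apply: tpair_inj => a b; have /rowP/(_ k) := commE a b.
by rewrite dbr_mulmx_dualmx dbr_dualmx_l !mxE.
Qed.

End Cobracket.

Theorem proposition5p4 (F : closedFieldType) (n : nat)
  (br : 'rV[F]_n -> 'rV[F]_n -> 'rV[F]_n) (E r : 'M[F]_n) :
  [pchar F] =i pred0 ->
  is_ENL br E ->
  is_coboundary_lie_bialgebra br r ->
  (is_ENL (dbr br r) (dualmx E) <->
   forall x : 'rV[F]_n, cobr br r (x *m E) = tmap E 1%:M (cobr br r x)).
Proof.
move=> _ [[br_linear_l _ _ _] _] [dual_lie _].
apply: iff_trans (is_ENL_left (dualmx E) dual_lie) _.
apply: iff_trans (dbr_dualmx_comm_basis r br_linear_l E) _.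
exact: cobr_mulmx_basis r br_linear_l E.
Qed.
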